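(* The family of operators $(T_u)_{u\ge 0}$ defined on $L$ by $(T_uf)(w)=\mathbb{E}\left[f\left(we^{-u}+\sigma(u)Z\right)\right]$, where $\sigma^2(u)=1-e^{-2u}$, is not strongly continuous on $(L,\|\cdot\|_L)$; that is, there exists $f\in L$ such that $\|T_uf-f\|_L$ does not converge to $0$ as $u\searrow 0$.
   Context: $D=D[0,1]$ denotes the space of all càdlàg functions $w:[0,1]\to\mathbb{R}$, and $\|\cdot\|$ denotes the supremum norm on $D$. $L$ is the set of all continuous functions $f:D\to\mathbb{R}$ such that $\sup_{w\in D}\frac{|f(w)|}{1+\|w\|^3}<\infty$, with norm $\|f\|_L=\sup_{w\in D}\frac{|f(w)|}{1+\|w\|^3}$. $Z$ denotes a standard Brownian motion on $[0,1]$, viewed as a random element of $D$. *)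

From HB Require Import structures.
From mathcomp Require Import all_boot all_order all_algebra.
From mathcomp Require Import all_classical all_reals all_analysis.
Set Implicit Arguments. Unset Strict Implicit. Unset Printing Implicit Defensive.
Import Order.TTheory GRing.Theory Num.Theory.
Import numFieldNormedType.Exports.
Local Open Scope classical_set_scope.
Local Open Scope ring_scope.

Section Defs.
Variable R : realType.

(* Elements of D[0,1] are represented as functions R -> R which are cadlag on
   [0,1] and extended constantly outside [0,1] (canonical representative). *)
Definition isD (w : R -> R) : Prop :=
  [/\ (forall t, 0 <= t < 1 -> w x @[x --> t^'+] --> w t),
      (forall t, 0 < t <= 1 -> exists l : R, w x @[x --> t^'-] --> l),
      (forall t, t < 0 -> w t = w 0) &
      (forall t, 1 < t -> w t = w 1)].

Definition supnorm (w : R -> R) : R := sup [set `|w t| | t in `[0, 1]].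

Definition inL (f : (R -> R) -> R) : Prop :=
  (forall w, isD w -> forall e : R, 0 < e -> exists2 d : R, 0 < d &
     forall v, isD v -> supnorm (v \- w) < d -> `|f v - f w| < e) /\
  (exists C : R, forall w, isD w -> `|f w| <= C * (1 + supnorm w ^+ 3)).

Definition normL (g : (R -> R) -> R) : \bar R :=
  ereal_sup [set (`|g w| / (1 + supnorm w ^+ 3))%:E | w in isD].

(* standard Brownian motion on [0,1] with continuous paths (extended
   constantly outside [0,1]); finite-dimensional law given through
   independent Gaussian increments *)
Definition isBM d (Omega : measurableType d) (P : probability Omega R)
  (Z : Omega -> R -> R) : Prop :=
  [/\ (forall t, measurable_fun setT (fun om => Z om t)),
      (forall om, Z om 0 = 0),
      (forall om, {within `[0, 1], continuous (Z om)}),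
      (forall om, (forall t, t < 0 -> Z om t = Z om 0) /\
                  (forall t, 1 < t -> Z om t = Z om 1)) &
      (forall (n : nat) (t : nat -> R) (A : nat -> set R),
         0 <= t 0 -> t n <= 1 -> (forall i, (i < n)%N -> t i < t i.+1) ->
         (forall i, measurable (A i)) ->
         P (\bigcap_(i in [set i | (i < n)%N])
              [set om | A i (Z om (t i.+1) - Z om (t i))]) =
         (\prod_(i < n) normal_prob 0 (Num.sqrt (t i.+1 - t i)) (A i))%E)].

Definition sigmaOU (u : R) : R := Num.sqrt (1 - expR (- (2 * u))).

Definition Tu d (Omega : measurableType d) (P : probability Omega R)
  (Z : Omega -> R -> R) (u : R) (f : (R -> R) -> R) : (R -> R) -> R :=
  fun w => fine ('E_P[fun om => f (fun t => (w t * expR (- u) + sigmaOU u * Z om t)%R)])%E.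

End Defs.

From HB Require Import structures.
From mathcomp Require Import all_boot all_order all_algebra.
From mathcomp Require Import all_classical all_reals all_analysis.
From mathcomp Require Import lra.
Import Order.TTheory GRing.Theory Num.Theory.
Import numFieldNormedType.Exports.
Local Open Scope classical_set_scope.
Local Open Scope ring_scope.

(* Take f w = h (w 0) with h x = x^3 cos x, which lies in L.  As Z 0 = 0, on the
   constant path x one has T_u f x = h (x e^-u).  For x a large multiple of 2 pi
   and u = ln (x / (x - pi)), which tends to 0 as x grows, x e^-u = x - pi, so cos
   flips sign and |T_u f x - f x| = x^3 + (x - pi)^3 >= (1 + x^3) / 2: the cubic
   weight of the norm cannot absorb the oscillation, and ||T_u f - f||_L >= 1/2 for
   arbitrarily small u. *)

Section cadlag.
Context {R : realType}.
Implicit Types (g v w : R -> R) (x : R).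

Lemma bounded_near_left_right g x :
  bounded_near g x^'- -> bounded_near g x^'+ -> bounded_near g (nbhs x).
Proof.
rewrite /bounded_near => gl gr; near=> M.
have gxM : `|g x| <= M by near: M; exact: nbhs_pinfty_ge.
have : x^'- [set y | `|g y| <= M] by near: M.
have : x^'+ [set y | `|g y| <= M] by near: M.
rewrite /at_left /at_right /within /= => hr hl; near=> y.
case: (ltgtP y x) => [yx|xy|->] //; [exact: (near hl y) | exact: (near hr y)].
Unshelve. all: by end_near. Qed.

Lemma compact_bounded_near (X : topologicalType) (K : set X) (f : X -> R) :
  compact K -> (forall p, K p -> bounded_near f (nbhs p)) ->
  [bounded f p | p in K].
Proof.
move=> /compact_near_coveringP cK fK.
apply: (cK _ _ (fun M p => `|f p| <= M)) => p /fK /ex_bound[B fB].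
exists ([set y | `|f y| <= B], [set M | B < M]); first split => //.
  exact: nbhs_pinfty_gt (num_real B).
by case=> y M [/= /le_trans + /ltW]; apply.
Qed.

Lemma isD_sub v w : isD v -> isD w -> isD (v \- w).
Proof.
move=> [vr vl vlo vhi] [wr wl wlo whi]; split => [t t01|t t01|t t0|t t1] /=.
- exact: cvgB (vr t t01) (wr t t01).
- have [[lv ?] [lw ?]] := (vl t t01, wl t t01).
  by exists (lv - lw); exact: cvgB.
- by rewrite vlo ?wlo.
- by rewrite vhi ?whi.
Qed.

Lemma isD_cst (c : R) : isD (fun=> c).
Proof. by split => // t _; [exact: cvg_cst | exists c; exact: cvg_cst]. Qed.

Lemma isD_right_lim g x : isD g -> exists l : R, g y @[y --> x^'+] --> l.
Proof.
case=> gr _ glo ghi.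
have [x0|x0] := ltP x 0.
  exists (g 0); apply: cvg_near_cst.
  by near=> y; apply: glo; near: y; exact: nbhs_right_lt.
have [x1|x1] := ltP x 1; first by exists (g x); apply: gr; rewrite x0.
exists (g 1); apply: cvg_near_cst.
near=> y; apply: ghi; apply: le_lt_trans x1 _; near: y; exact: nbhs_right_gt.
Unshelve. all: by end_near. Qed.

Lemma isD_left_lim g x : isD g -> exists l : R, g y @[y --> x^'-] --> l.
Proof.
case=> _ gl glo ghi.
have [x0|x0] := leP x 0.
  exists (g 0); apply: cvg_near_cst.
  by near=> y; apply: glo; apply: lt_le_trans x0; near: y; exact: nbhs_left_lt.
have [x1|x1] := leP x 1; first by apply: gl; rewrite x0.
exists (g 1); apply: cvg_near_cst.
by near=> y; apply: ghi; near: y; exact: nbhs_left_gt.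
Unshelve. all: by end_near. Qed.

Lemma isD_bounded g : isD g -> [bounded g t | t in `[0, 1]].
Proof.
move=> gD; apply: compact_bounded_near; first exact: segment_compact.
move=> x _; apply: bounded_near_left_right.
- by have [l /cvg_bounded] := isD_left_lim _ x gD.
- by have [l /cvg_bounded] := isD_right_lim _ x gD.
Qed.

(* [sup] of a set with no upper bound is 0, hence the need for [isD_bounded]. *)
Lemma normr_le_supnorm g t : isD g -> 0 <= t <= 1 -> `|g t| <= supnorm g.
Proof.
move=> /isD_bounded[M [_ gM]] t01; apply: sup_upper_bound.
  split; first by exists `|g t|, t => //=; rewrite in_itv.
  by exists (M + 1) => _ [s s01 <-]; apply: gM s01; rewrite ltrDl.
by exists t => //=; rewrite in_itv.
Qed.

Lemma supnorm_cst (c : R) : supnorm (fun=> c) = `|c|.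
Proof.
have t01 : 0 <= (0 : R) <= 1 by rewrite lexx ler01.
apply/eqP; rewrite eq_le (normr_le_supnorm _ 0 (isD_cst c) t01) andbT.
apply: ge_sup; first by exists `|c|, 0 => //=; rewrite in_itv.
by move=> _ [s _ <-].
Qed.

End cadlag.

Section norm_L.
Context {R : realType}.

Lemma normL_ge (G : (R -> R) -> R) w :
  isD w -> ((`|G w| / (1 + supnorm w ^+ 3))%:E <= normL G)%E.
Proof. by move=> wD; apply: ereal_sup_ubound; exists w. Qed.

Lemma inL_comp_eval (h : R -> R) (t0 C : R) : 0 <= t0 <= 1 -> continuous h ->
  (forall x, `|h x| <= C * (1 + `|x| ^+ 3)) -> inL (fun w => h (w t0)).
Proof.
move=> t01 hc hC; split.
  move=> w wD e e0.
  have /cvgrPdist_lt/(_ e e0)/nbhs_ballP [r /= r0 hr] := hc (w t0).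
  exists r => // v vD vw; rewrite distrC; apply: hr.
  rewrite -ball_normE /= distrC; apply: le_lt_trans vw.
  exact: normr_le_supnorm (v \- w) t0 (isD_sub _ _ vD wD) t01.
have C0 : 0 <= C.
  by have := hC 0; rewrite normr0 expr0n /= addr0 mulr1; apply: le_trans.
exists C => w wD; apply: le_trans (hC _) _.
have wt0 := normr_le_supnorm _ t0 wD t01.
by rewrite ler_wpM2l // lerD2l lerXn2r // ?nnegrE // (le_trans _ wt0).
Qed.

Lemma Tu_comp_eval0_cst d (Omega : measurableType d) (P : probability Omega R)
    (Z : Omega -> R -> R) (h : R -> R) (u c : R) :
  (forall om, Z om 0 = 0) ->
  Tu P Z u (fun w => h (w 0)) (fun=> c) = h (c * expR (- u)).
Proof.
move=> Z0; rewrite /Tu -[RHS]/(fine (h _)%:E) -(expectation_cst P).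
by congr (fine 'E_P[_]); apply/funext => om /=; rewrite Z0 mulr0 addr0.
Qed.

End norm_L.

Lemma not_cvg_at_right0 {R : realType} (g : R -> \bar R) (c : R) : 0 < c ->
  (forall r, 0 < r -> exists2 u, 0 < u < r & (c%:E <= g u)%E) ->
  ~ g u @[u --> 0^'+] --> 0%E.
Proof.
move=> c0 gc /(_ _ (open_ereal_lt' (_ : 0 < c%:E)%E)) /=.
rewrite lte_fin => /(_ c0)[r /= r0 gr].
have [u /andP[u0 ur] cgu] := gc r r0.
suff : (g u < c%:E)%E by rewrite ltNge cgu.
by apply: (gr u _ u0); rewrite /ball_ /= sub0r normrN gtr0_norm.
Qed.

Section cube_cos.
Context {R : realType}.

Definition cube_cos (x : R) : R := x ^+ 3 * cos x.

Lemma continuous_cube_cos : continuous cube_cos.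
Proof.
by move=> x; apply: (@continuousM _ _ (fun y : R => y ^+ 3) cos);
  [exact: exprn_continuous | exact: continuous_cos].
Qed.

Lemma normr_cube_cos_le (x : R) : `|cube_cos x| <= `|x| ^+ 3.
Proof. by rewrite /cube_cos normrM normrX ler_piMr ?exprn_ge0 // cos_max.
Qed.

Lemma cube_cos_jump (x y : R) : 1 <= x -> 0 <= y -> cos x = 1 -> cos y = -1 ->
  (1 + x ^+ 3) / 2 <= `|cube_cos y - cube_cos x|.
Proof.
move=> x1 y0 cx cy; rewrite /cube_cos cx cy mulr1 mulrN1 -opprD normrN.
have x3 : 1 <= x ^+ 3 by rewrite exprn_ege1.
have y3 : 0 <= y ^+ 3 by rewrite exprn_ge0.
rewrite ger0_norm; lra.
Qed.

Lemma cos_eq1_gt (a : R) : exists2 x, a < x & cos x = 1.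
Proof.
have pi0 : 0 < pi *+ 2 :> R by rewrite pmulrn_rgt0 // pi_gt0.
exists (pi *+ 2 *+ (Num.truncn (a / (pi *+ 2))).+1).
  by rewrite -mulr_natr -ltr_pdivrMl // mulrC truncnS_gt.
by rewrite -[_ *+ _]add0r periodicn ?cos0 //; exact: cosD2pi.
Qed.

(* Take [x] a multiple of [2 pi] beyond [pi (1 + r) / r] and [u = ln (x / (x - pi))],
   so that [x e^-u = x - pi]. *)
Lemma small_contraction_flips_cos (r : R) : 0 < r ->
  exists2 u, 0 < u < r & exists x, [/\ 1 <= x, cos x = 1,
    0 <= x * expR (- u) & cos (x * expR (- u)) = -1].
Proof.
move=> r0; have pi0 := @pi_gt0 R.
have [x xgt cx] := cos_eq1_gt (pi * (1 + r) / r).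
have xpi : pi < x.
  by apply: lt_trans xgt; rewrite ltr_pdivlMr // ltr_pM2l // ltrDr.
have xpi0 : 0 < x - pi by rewrite subr_gt0.
have x0 : 0 < x := lt_trans pi0 xpi.
have ratio0 : 0 < x / (x - pi) by rewrite divr_gt0.
have ex : x * expR (- ln (x / (x - pi))) = x - pi.
  by rewrite expRN lnK ?posrE // invf_div mulrC divfK // gt_eqF.
exists (ln (x / (x - pi))).
  rewrite ln_gt0 ?ltr_pdivlMr // ?mul1r ?gtrBl //=.
  rewrite -[r in _ < r]expRK ltr_ln ?posrE ?expR_gt0 //.
  apply: lt_le_trans (expR_ge1Dx r).
  rewrite ltr_pdivrMr //; move: xgt; rewrite ltr_pdivrMr // => xgt.
  nra.
exists x; rewrite ex; split.
- by apply: le_trans (ltW xpi); rewrite (le_trans _ (pi_ge2 R)) ?ler1n.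
- exact: cx.
- exact: ltW.
- have := cosDpi (x - pi); rewrite subrK cx => /eqP.
  by rewrite eq_sym eqr_oppLR => /eqP.
Qed.

Lemma normL_Tu_cube_cos_ge d (Omega : measurableType d) (P : probability Omega R)
    (Z : Omega -> R -> R) (r : R) :
  (forall om, Z om 0 = 0) -> 0 < r ->
  exists2 u, 0 < u < r & ((1 / 2)%:E <=
    normL (fun w => Tu P Z u (fun v => cube_cos (v 0)) w - cube_cos (w 0))%R)%E.
Proof.
move=> Z0 /small_contraction_flips_cos[u u0r [x [x1 cx y0 cy]]].
exists u => //; apply: le_trans (normL_ge _ _ (isD_cst x)).
have x0 : 0 <= x := le_trans ler01 x1.
rewrite lee_fin Tu_comp_eval0_cst // supnorm_cst (ger0_norm x0).
rewrite ler_pdivlMr ?ltr_pwDl ?exprn_ge0 // mul1r mulrC.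
exact: cube_cos_jump.
Qed.

End cube_cos.

Theorem lemma1 (R : realType) (d : measure_display) (Omega : measurableType d)
  (P : probability Omega R) (Z : Omega -> R -> R) :
  isBM P Z ->
  exists f : (R -> R) -> R, inL f /\
    ~ ((normL (fun w => Tu P Z u f w - f w)) @[u --> 0^'+] --> 0%E).
Proof.
case=> _ Z0 _ _ _; exists (fun w => cube_cos (w 0)); split.
  apply: (inL_comp_eval cube_cos 0 1); rewrite ?lexx ?ler01 //.
    exact: continuous_cube_cos.
  by move=> x; rewrite mul1r (le_trans (normr_cube_cos_le x)) ?lerDr.
apply: (@not_cvg_at_right0 _ _ (1 / 2)); first by rewrite divr_gt0.
by move=> r; exact: normL_Tu_cube_cos_ge.
Qed.
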